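(* Let $X$ be a finite set, $r\ge 3$, and $\tau$ a non-empty subset of $\binom{X}{r}$. If $\tau$ is slim then $\tau$ is thin. Moreover, for $r=3$, $\tau$ is thin if and only if $\tau$ is slim.
   Context: $L(\tau)=\bigcup_{s\in\tau}s$. For $\tau\subseteq\binom{X}{r}$ non-empty, ${\rm exc}(\tau)=|L(\tau)|-|\tau|-(r-1)$ and $\tau$ is thin if ${\rm exc}(\tau')\ge0$ for all non-empty $\tau'\subseteq\tau$. For a non-empty collection $\tau$ of subsets of $X$ each of size at least 3, ${\rm exc}'(\tau)=|L(\tau)|-2-\sum_{s\in\tau}(|s|-2)$, and $\tau$ is slim if ${\rm exc}'(\tau')\ge0$ for all non-empty $\tau'\subseteq\tau$. *)

From mathcomp Require Import all_boot all_order all_algebra.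
Set Implicit Arguments. Unset Strict Implicit. Unset Printing Implicit Defensive.
Import GRing.Theory Num.Theory.
Local Open Scope ring_scope.

Definition L (X : finType) (tau : {set {set X}}) : {set X} :=
  \bigcup_(s in tau) s.

(* tau is a subset of binom(X, r): every member has exactly r elements *)
Definition r_uniform (X : finType) (r : nat) (tau : {set {set X}}) : Prop :=
  forall s, s \in tau -> #|s| = r.

Definition exc (X : finType) (r : nat) (tau : {set {set X}}) : int :=
  (#|L tau|%:Z - #|tau|%:Z - (r%:Z - 1)).

Definition thin (X : finType) (r : nat) (tau : {set {set X}}) : Prop :=
  forall tau' : {set {set X}}, tau' \subset tau -> tau' != set0 ->
    0 <= exc r tau'.

Definition exc' (X : finType) (tau : {set {set X}}) : int :=
  #|L tau|%:Z - 2 - \sum_(s in tau) (#|s|%:Z - 2).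

Definition slim (X : finType) (tau : {set {set X}}) : Prop :=
  (forall s, s \in tau -> 3 <= #|s|)%N /\
  forall tau' : {set {set X}}, tau' \subset tau -> tau' != set0 ->
    0 <= exc' tau'.

(* For an r-uniform family with k members, exc and exc' differ by (k - 1)(r - 3),
   which is nonnegative when r >= 3 and k >= 1 and vanishes when r = 3. *)
From mathcomp Require Import all_boot all_order all_algebra.
From mathcomp Require Import ring.
Import Order.TTheory GRing.Theory Num.Theory.
Local Open Scope ring_scope.

Lemma r_uniformS {X : finType} {r : nat} {tau tau' : {set {set X}}} :
  tau' \subset tau -> r_uniform r tau -> r_uniform r tau'.
Proof. by move=> sub_tau' unif s /(subsetP sub_tau'); apply: unif. Qed.

Lemma exc'_uniform {X : finType} {r : nat} {tau : {set {set X}}} :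
  r_uniform r tau -> exc' tau = exc r tau - (#|tau|%:Z - 1) * (r%:Z - 3).
Proof.
move=> unif; rewrite /exc' /exc.
have -> : \sum_(s in tau) (#|s|%:Z - 2) = #|tau|%:Z * (r%:Z - 2).
  rewrite (eq_bigr (fun=> r%:Z - 2)) => [|s /unif -> //].
  by rewrite sumr_const -[LHS]mulr_natl natz.
ring.
Qed.

Lemma exc'_le_exc {X : finType} {r : nat} {tau : {set {set X}}} :
  (3 <= r)%N -> tau != set0 -> r_uniform r tau -> exc' tau <= exc r tau.
Proof.
rewrite -card_gt0 => r_ge3 tau_gt0 /exc'_uniform ->.
by rewrite gerBl mulr_ge0 // subr_ge0 lez_nat.
Qed.

Lemma exc'_uniform3 {X : finType} {tau : {set {set X}}} :
  r_uniform 3 tau -> exc' tau = exc 3 tau.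
Proof. by move/exc'_uniform ->; rewrite subrr mulr0 subr0. Qed.

Lemma slim_thin {X : finType} {r : nat} {tau : {set {set X}}} :
  (3 <= r)%N -> r_uniform r tau -> slim tau -> thin r tau.
Proof.
move=> r_ge3 unif [_ slim_tau] tau' sub_tau' tau'_n0.
apply: le_trans (slim_tau _ sub_tau' tau'_n0) _.
exact: exc'_le_exc r_ge3 tau'_n0 (r_uniformS sub_tau' unif).
Qed.

Lemma thin3_slim {X : finType} {tau : {set {set X}}} :
  r_uniform 3 tau -> thin 3 tau -> slim tau.
Proof.
move=> unif thin_tau; split=> [s /unif -> // | tau' sub_tau' tau'_n0].
by rewrite (exc'_uniform3 (r_uniformS sub_tau' unif)) thin_tau.
Qed.

Theorem lemma4 (X : finType) (r : nat) (tau : {set {set X}}) :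
  (3 <= r)%N -> tau != set0 -> r_uniform r tau ->
  (slim tau -> thin r tau) /\ (r = 3%N -> (thin r tau <-> slim tau)).
Proof.
move=> r_ge3 _ unif; split; first exact: slim_thin.
move=> r3; subst r; split; first exact: thin3_slim.
exact: slim_thin.
Qed.
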